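(* Let $M$ be an observable FSM with $n$ states, all reachable, such that the initial state $s_0$ is the only d-reachable state of $M$ and no two distinct states of $M$ are r-distinguishable. Let $m\ge n$. Then (i) every $\bar x/\bar y\in L_M(s_0)$ of length $mn$ has a prefix $\pi$ with $term(s_0,\pi,m)\neq\varnothing$, so $Tr(s_0,m)\subseteq\bigcup_{i=0}^{mn}\Sigma_I^i$; and (ii) every test suite $T$ produced by $\textsc{GenerateTestSuite}(M,m)$ satisfies $|T|\le|\Sigma_I|^{mn}$.
   Context: FSMs and notation. An FSM is $M=(S,s_0,\Sigma_I,\Sigma_O,h_M)$ with finite state set $S$, initial state $s_0$, finite input/output alphabets and $h_M\subseteq S\times\Sigma_I\times\Sigma_O\times S$. IO sequences are written $\bar x/\bar y$. $L_M(s)$ is the set of IO sequences $x_1\dots x_k/y_1\dots y_k$ such that there are states $s=q_0,\dots,q_k$ with $(q_{i-1},x_i,y_i,q_i)\in h_M$; $L(M)=L_M(s_0)$. $out(s,x)=\{y\mid\exists s'.(s,x,y,s')\in h_M\}$. $M$ is observable if for all $s,x,y$ at most one $s'$ has $(s,x,y,s')\in h_M$; then $s\text{-after-}\alpha$ is the unique state reached from $s$ by $\alpha\in L_M(s)$. $\Delta_M(s)=\{x\mid out(s,x)\neq\varnothing\}$. $\mathrm{Pref}$ denotes the set of prefixes (including $\epsilon$), lifted to sets; $A.B=\{a.b\mid a\in A,b\in B\}$ with $A.\varnothing=A$. d-reachability and state cover. $\bar x$ is strongly defined in $M$ if for every prefix $\bar x_1.x$ of $\bar x$ ($x\in\Sigma_I$)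 and every $\bar x_1/\bar y_1\in L(M)$, $x\in\Delta_M(s_0\text{-after-}\bar x_1/\bar y_1)$. $\bar x$ d-reaches $s$ if $\bar x$ is strongly defined and $\{s_0\text{-after-}\bar x/\bar y\mid \bar x/\bar y\in L(M)\}=\{s\}$. For $S'\subseteq S$, $\widehat{S'}$ is the set of states in $S'$ d-reached by some input sequence. A state cover $V$ is a set consisting of $\epsilon$ (which d-reaches $s_0$) and, for every other d-reachable state, exactly one input sequence d-reaching it; for $s\in\widehat S$ let $\bar v_s\in V$ be the element d-reaching $s$. $V'=\{\bar x/\bar y\in L(M)\mid \bar x\in V\}$. r-distinguishability. Every $W\subseteq\Sigma_I^*$ r(0)-distinguishes states $s_1,s_2$ with $\Delta_M(s_1)\neq\Delta_M(s_2)$. For $k\ge0$, $W$ r($k+1$)-distinguishes $s_1,s_2$ if it r($k$)-distinguishes them, or there is $x\in\Delta_M(s_1)\cap\Delta_M(s_2)\cap\mathrm{Pref}(W)$ such that for every $y\in out(s_1,x)\cap out(s_2,x)$ some $W'$ with $\{x\}.W'\subseteq\mathrm{Pref}(W)$ r($k$)-distinguishes $s_1\text{-after-}x/y$ and $s_2\text{-after-}x/y$. $W$ r-distinguishes $s_1,s_2$ if it r($k$)-distinguishes them for some $k$; states are r-distinguishable if some $W$ r-distinguishes them. $S_D$ is the set of all maximal (w.r.t. inclusion) subsets of $S$ whose elements are pairwise r-distinguishable (a state r-distinguishable from no other state yields a singleton). Termination and traversal sets. For $s\in\widehat S$, $\bar x/\bar y\in L_M(s)$ and $S'\in S_D$,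 say $S'$ terminates $\bar x/\bar y$ for $s$ and $m$ if the number of nonempty prefixes $\pi$ of $\bar x/\bar y$ with $s\text{-after-}\pi\in S'$ equals $m-|\widehat{S'}|+1$ and no proper prefix of $\bar x/\bar y$ is terminated for $s$ and $m$ by any element of $S_D$. $term(s,\bar x/\bar y,m)$ is the set of such $S'$. $Tr(s,m)=\mathrm{Pref}\{\bar x\mid\exists\bar y.\ \bar x/\bar y\in L_M(s)\wedge term(s,\bar x/\bar y,m)\neq\varnothing\}$. Procedure $\textsc{GenerateTestSuite}(M,m)$: (1) Choose a state cover $V$, form $V'$, and set $T:=\bigcup_{s\in\widehat S}\{\bar v_s\}.Tr(s,m)$. (2) Let $D=\{(s,\bar x/\bar y)\mid s\in\widehat S,\ \bar x/\bar y\in L_M(s),\ term(s,\bar x/\bar y,m)\neq\varnothing\}$. For each $(s,\bar x/\bar y)\in D$: choose some $S_i\in term(s,\bar x/\bar y,m)$; then for every pair of traces $\bar x_1/\bar y_1,\bar x_2/\bar y_2$ in $V'\cup\{\beta.\pi\mid \beta\in V'\text{ with input portion }\bar v_s,\ \pi\in\mathrm{Pref}(\bar x/\bar y)\}$, let $s_j=s_0\text{-after-}\bar x_j/\bar y_j$; if $s_1\neq s_2$ and $s_1,s_2\in S_i$, let $W'=\{\bar x'\mid \bar x_1.\bar x'\in\mathrm{Pref}(T)\text{ and }\bar x_2.\bar x'\in\mathrm{Pref}(T)\}$ (for the current $T$); if $W'$ does not r-distinguish $s_1,s_2$, choose any $W$ that r-distinguishes $s_1,s_2$ and set $T:=T\cup\{\bar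 x_1,\bar x_2\}.W$. (3) Finally remove from $T$ every sequence that is a proper prefix of another element of $T$, and return $T$. *)

(* Finite state machines, d-reachability, r-distinguishability,
   termination, traversal sets and the (nondeterministic) procedure
   GenerateTestSuite, modelled as a relation between M, m and the possible outputs T. *)
From mathcomp Require Import all_boot.
From mathcomp Require Import boolp.

Set Implicit Arguments.
Unset Strict Implicit.
Unset Printing Implicit Defensive.

Section FSM.

(* An FSM M = (S, s0, Sigma_I, Sigma_O, h_M) with h_M given by its characteristic
   function h s x y s' <-> (s,x,y,s') \in h_M. *)
Variables (S I O : finType) (s0 : S) (h : S -> I -> O -> S -> bool).

(* IO sequences x1..xk/y1..yk are sequences of (input, output) pairs. *)
Definition trace := seq (I * O).
Definition ins (t : trace) : seq I := map fst t.

Definition out (s : S) (x : I) : pred O := fun y => [exists s', h s x y s'].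
Definition Delta (s : S) : pred I := fun x => [exists y, out s x y].

Definition observable : Prop :=
  forall s x y s1 s2, h s x y s1 -> h s x y s2 -> s1 = s2.

Definition reach (s : S) (t : trace) : {set S} :=
  foldl (fun (A : {set S}) (p : I * O) =>
           [set s' | [exists q in A, h q p.1 p.2 s']]) [set s] t.

Definition inL (s : S) (t : trace) : bool := reach s t != set0.

(* s-after-t : the (for observable M, unique) state reached from s by t *)
Definition after (s : S) (t : trace) : S := odflt s [pick q in reach s t].

Definition is_prefix (T : Type) (u v : seq T) : Prop := exists k, u = take k v.
Definition is_proper_prefix (T : Type) (u v : seq T) : Prop :=
  exists2 k, k < size v & u = take k v.
Definition Pref (W : seq I -> Prop) : seq I -> Prop :=
  fun u => exists2 w, W w & is_prefix u w.

Definition strongly_defined (xs : seq I) : Prop :=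
  forall xs1 x rest, xs = xs1 ++ x :: rest ->
  forall t, ins t = xs1 -> inL s0 t -> Delta (after s0 t) x.

Definition d_reaches (xs : seq I) (s : S) : Prop :=
  strongly_defined xs /\
  (exists t, ins t = xs /\ inL s0 t) /\
  (forall t, ins t = xs -> inL s0 t -> after s0 t = s).

Definition d_reachable (s : S) : Prop := exists xs, d_reaches xs s.

Definition dhat (A : {set S}) : {set S} := [set s in A | `[< d_reachable s >] ].

Fixpoint rdist (k : nat) (W : seq I -> Prop) (s1 s2 : S) : Prop :=
  match k with
  | 0 => exists x, Delta s1 x != Delta s2 x
  | k'.+1 =>
      rdist k' W s1 s2 \/
      exists x, [/\ Delta s1 x, Delta s2 x, Pref W [:: x] &
        forall y, out s1 x y -> out s2 x y ->
          exists W' : seq I -> Prop,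
            (forall w, W' w -> Pref W (x :: w)) /\
            rdist k' W' (after s1 [:: (x, y)]) (after s2 [:: (x, y)])]
  end.

Definition r_distinguishes (W : seq I -> Prop) (s1 s2 : S) : Prop :=
  exists k, rdist k W s1 s2.

Definition r_distinguishable (s1 s2 : S) : Prop :=
  exists W, r_distinguishes W s1 s2.

Definition pairwise_rdist (A : {set S}) : Prop :=
  forall s1 s2, s1 \in A -> s2 \in A -> s1 != s2 -> r_distinguishable s1 s2.

Definition in_SD (A : {set S}) : Prop :=
  pairwise_rdist A /\ (forall B, pairwise_rdist B -> A \subset B -> B = A).

Definition term_count (s : S) (t : trace) (m : nat) (S' : {set S}) : Prop :=
  in_SD S' /\
  count (fun k => after s (take k t) \in S') (iota 1 (size t)) = m - #|dhat S'| + 1.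

(* no_term_before s t j : none of the prefixes take i t (i < j) of t is
   terminated (for s and m) by any element of S_D; this unrolls the recursive
   clause "no proper prefix is terminated". *)
Fixpoint no_term_before (s : S) (t : trace) (m : nat) (j : nat) : Prop :=
  match j with
  | 0 => True
  | i.+1 => no_term_before s t m i /\
            ~ (exists S'', term_count s (take i t) m S'' /\ no_term_before s t m i)
  end.

Definition term (s : S) (t : trace) (m : nat) (S' : {set S}) : Prop :=
  inL s t /\ term_count s t m S' /\ no_term_before s t m (size t).

Definition Tr (s : S) (m : nat) : seq I -> Prop :=
  Pref (fun xs => exists t, [/\ ins t = xs, inL s t & exists S', term s t m S']).

Definition Tset := seq I -> Prop.

(* a state cover, given as the map s |-> v_s on d-reachable states *)
Definition state_cover (v : S -> seq I) : Prop :=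
  v s0 = [::] /\ forall s, d_reachable s -> d_reaches (v s) s.

Definition inV (v : S -> seq I) (xs : seq I) : Prop :=
  exists2 s, d_reachable s & xs = v s.

Definition inV' (v : S -> seq I) (t : trace) : Prop := inL s0 t /\ inV v (ins t).

(* initial T of step (1) *)
Definition T_init (v : S -> seq I) (m : nat) : Tset :=
  fun z => exists s, d_reachable s /\ exists2 w, Tr s m w & z = v s ++ w.

(* the set D of step (2) *)
Definition inD (m : nat) (p : S * trace) : Prop :=
  [/\ d_reachable p.1, inL p.1 p.2 & exists S', term p.1 p.2 m S'].

Definition pair_traces (v : S -> seq I) (s : S) (t : trace) : trace -> Prop :=
  fun z => inV' v z \/
    exists beta pi, [/\ inV' v beta, ins beta = v s, is_prefix pi t & z = beta ++ pi].

Definition Wprime (T : Tset) (x1 x2 : seq I) : Tset :=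
  fun x' => Pref T (x1 ++ x') /\ Pref T (x2 ++ x').

(* processing of one pair of traces with the chosen S_i, T ~> T' *)
Definition pair_step (Si : {set S}) (p : trace * trace) (T T' : Tset) : Prop :=
  let s1 := after s0 p.1 in let s2 := after s0 p.2 in
  let x1 := ins p.1 in let x2 := ins p.2 in
  let cond := [/\ s1 != s2, s1 \in Si, s2 \in Si &
                  ~ r_distinguishes (Wprime T x1 x2) s1 s2] in
  (cond -> exists W : Tset, r_distinguishes W s1 s2 /\
      forall z, T' z <-> (T z \/ exists2 w, W w & (z = x1 ++ w \/ z = x2 ++ w))) /\
  (~ cond -> forall z, T' z <-> T z).

Fixpoint chain (A : Type) (R : A -> Tset -> Tset -> Prop) (l : seq A) (T T' : Tset)
    : Prop :=
  match l with
  | [::] => forall z, T' z <-> T z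
  | a :: l' => exists Tm, R a T Tm /\ chain R l' Tm T'
  end.

(* processing of one element (s, t) of D *)
Definition d_step (v : S -> seq I) (m : nat) (p : S * trace) (T T' : Tset) : Prop :=
  exists Si, term p.1 p.2 m Si /\
  exists l : seq (trace * trace),
    (forall q, q \in l -> pair_traces v p.1 p.2 q.1 /\ pair_traces v p.1 p.2 q.2) /\
    (forall z1 z2, pair_traces v p.1 p.2 z1 -> pair_traces v p.1 p.2 z2 ->
        ((z1, z2) \in l) \/ ((z2, z1) \in l)) /\
    chain (pair_step Si) l T T'.

Definition GenerateTestSuite (m : nat) (T : Tset) : Prop :=
  exists v, state_cover v /\
  exists d : seq (S * trace), uniq d /\ (forall p, p \in d <-> inD m p) /\
  exists T2, chain (d_step v m) d (T_init v m) T2 /\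
  forall z, T z <-> (T2 z /\ ~ exists2 z', T2 z' & is_proper_prefix z z').

End FSM.

From mathcomp Require Import all_boot.
From mathcomp Require Import boolp.
From mathcomp Require Import zify.

Set Implicit Arguments.
Unset Strict Implicit.
Unset Printing Implicit Defensive.

(* When no two distinct states are r-distinguishable, every
   element of S_D is a singleton {s}, and |hat{s}| is 1 for s = s0 and 0
   otherwise.  So a trace is terminated by {s} for s0 as soon as its nonempty
   prefixes have visited s exactly m - [s == s0] + 1 times.  The capacities
   m - [s == s0] sum to m n - 1, hence by pigeonhole the first m n prefixes of
   any trace of length at least m n overfill some state; since visit counts grow
   by at most one per step, some prefix of length <= m n hits the threshold
   exactly, and the shortest terminated prefix is then terminated in the sense
   of [term].  Conversely a terminated trace has no terminated proper prefix,
   so its length is at most m n; this gives part (i).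
   For part (ii), the distinguishing step of GenerateTestSuite never fires
   (it needs two distinct states of one element of S_D), so the returned suite
   is the set of prefix-maximal elements of Tr(s0, m).  These are words of
   length <= m n, no one a proper prefix of another; padding them to length
   m n is injective, which bounds their number by |Sigma_I|^(m n). *)

Lemma sum_count_hits (S : finType) (f : nat -> S) (l : seq nat) :
  \sum_(s : S) count (fun j => f j == s) l = size l.
Proof.
elim: l => [|j l IH] /=; first by rewrite big1.
rewrite big_split /= IH -add1n; congr (_ + _).
rewrite (bigD1 (f j)) //= eqxx big1 // => s /negbTE.
by rewrite eq_sym => ->.
Qed.

Lemma pigeonhole_count (S : finType) (f : nat -> S) (cap : S -> nat)
    (l : seq nat) :
  \sum_(s : S) cap s < size l -> exists s, cap s < count (fun j => f j == s) l.
Proof.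
move=> over_cap.
have [s over_s|none] := pickP (fun s => cap s < count (fun j => f j == s) l).
  by exists s.
suff : size l <= \sum_(s : S) cap s by rewrite leqNgt over_cap.
rewrite -(sum_count_hits f); apply: leq_sum => s _.
by rewrite leqNgt none.
Qed.

Lemma discrete_ivt (c : nat -> nat) (thr N : nat) :
  c 0 = 0 -> (forall k, c k.+1 <= (c k).+1) -> thr <= c N ->
  exists2 k, k <= N & c k = thr.
Proof.
move=> c0 cS; elim: N => [|N IH] thr_le.
  by exists 0 => //; move: thr_le; rewrite c0; case: thr.
have [le_thr|lt_thr] := leqP thr (c N).
  by have [k le_kN ck] := IH le_thr; exists k => //; apply: leqW.
by exists N.+1 => //; have := cS N; lia.
Qed.

Section Words.

Variable I : finType.

Fixpoint words_upto (N : nat) : seq (seq I) :=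
  if N is N'.+1 then [::] :: [seq x :: z | x <- enum I, z <- words_upto N']
  else [:: [::]].

Lemma mem_words_upto N (z : seq I) : size z <= N -> z \in words_upto N.
Proof.
elim: N z => [|N IH] [|x z] //=; rewrite ?inE //= ltnS => size_z.
by apply: allpairs_f; [exact: mem_enum | exact: IH].
Qed.

Lemma bounded_words_enum (P : seq I -> Prop) (N : nat) :
  (forall z, P z -> size z <= N) ->
  exists l : seq (seq I), uniq l /\ forall z, P z <-> z \in l.
Proof.
move=> P_size; exists (undup [seq z <- words_upto N | `[< P z >]]).
split=> [|z]; first exact: undup_uniq.
rewrite mem_undup mem_filter; split=> [Pz|/andP[/asboolP //]].
by rewrite mem_words_upto ?P_size ?andbT //; apply/asboolP.
Qed.

(* A prefix-free list of distinct words of length at most N has at most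
   |I|^N elements: padding with a letter x0 embeds it in the N-tuples. *)
Lemma prefix_free_size (x0 : I) (N : nat) (l : seq (seq I)) :
  uniq l -> {in l, forall z, size z <= N} ->
  {in l &, forall z1 z2, ~ is_proper_prefix z1 z2} ->
  size l <= #|I| ^ N.
Proof.
move=> l_uniq l_size l_free.
pose pad (z : seq I) := z ++ nseq (N - size z) x0.
pose f z : N.-tuple I := insubd [tuple of nseq N x0] (pad z).
have size_pad z : z \in l -> size (pad z) = N.
  by move=> /l_size le_zN; rewrite /pad size_cat size_nseq subnKC.
(* equal paddings force the shorter word to be a prefix of the longer *)
have pad_le z1 z2 : z1 \in l -> z2 \in l -> size z1 <= size z2 ->
    pad z1 = pad z2 -> z1 = z2.
  move=> l1 l2 le12 eq_pad.
  have z1E : z1 = take (size z1) z2.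
    by rewrite -(takel_cat (nseq (N - size z2) x0) le12) -/(pad z2) -eq_pad take_size_cat.
  have [lt12|ge12] := ltnP (size z1) (size z2).
    by case: (l_free _ _ l1 l2); exists (size z1).
  by rewrite z1E take_oversize.
have f_inj : {in l &, injective f}.
  move=> z1 z2 l1 l2 /(congr1 val); rewrite !val_insubd !size_pad ?eqxx //.
  by have [le12|/ltnW le21] := leqP (size z1) (size z2);
    [apply: pad_le | move=> /esym eq_pad; apply/esym/pad_le].
rewrite -(size_map f) -card_tuple -(card_uniqP _) ?map_inj_in_uniq //.
exact: max_card.
Qed.

End Words.

Lemma chain_trivial (I : finType) (A : Type) (R : A -> Tset I -> Tset I -> Prop)
    (l : seq A) (T T' : Tset I) :
  (forall a T1 T2, R a T1 T2 -> forall z, T2 z <-> T1 z) ->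
  chain R l T T' -> forall z, T' z <-> T z.
Proof.
move=> R_triv; elim: l T => [|a l IH] T //= [Tm [RaT chain_l]] z.
by rewrite (IH _ chain_l z); exact: R_triv RaT z.
Qed.

Section Termination.

Variables (S I O : finType) (s0 : S) (h : S -> I -> O -> S -> bool).

Lemma inL_take (s : S) (t : trace I O) (k : nat) :
  inL h s t -> inL h s (take k t).
Proof.
rewrite /inL /reach -{1}(cat_take_drop k t) foldl_cat.
set A := foldl _ _ (take k t); apply: contra => /eqP ->.
elim: (drop k t) => [|p l IH] //=.
suff -> : [set s' | [exists q in set0, h q p.1 p.2 s']] = set0 :> {set S} by [].
by apply/setP => x; rewrite !inE; apply/existsP => -[q]; rewrite inE.
Qed.

Lemma no_term_beforeP (s : S) (t : trace I O) (m j : nat) :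
  no_term_before s0 h s t m j <->
  forall i, i < j -> ~ exists S' : {set S}, term_count s0 h s (take i t) m S'.
Proof.
elim: j => [|j IH] /=; first by split.
split=> [[/IH before_j not_j] i|before_Sj].
  rewrite ltnS leq_eqVlt => /orP[/eqP -> [S' cnt]|]; last exact: before_j.
  by apply: not_j; exists S'; split=> //; apply/IH.
have before_j : no_term_before s0 h s t m j.
  by apply/IH => i lt_ij; apply: before_Sj; apply: leqW.
by split=> // -[S' [cnt _]]; apply: (before_Sj j) => //; exists S'.
Qed.

Lemma term_count_nonempty (s : S) (t : trace I O) (m : nat) (S' : {set S}) :
  term_count s0 h s t m S' -> 0 < size t.
Proof. by case: t => [|//] [_]; rewrite /= addn1. Qed.

Lemma Tr_inhabited (s : S) (m : nat) (xs : seq I) : Tr s0 h s m xs -> inhabited I.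
Proof.
move=> [w [[|[x y] t] [_ _ [S' [_ [cnt _]]]]] _]; last exact: inhabits x.
by have := term_count_nonempty cnt.
Qed.

Lemma first_termination (s : S) (t : trace I O) (m k : nat) (S' : {set S}) :
  inL h s t -> k <= size t -> term_count s0 h s (take k t) m S' ->
  exists2 k', k' <= k & exists S'' : {set S}, term s0 h s (take k' t) m S''.
Proof.
move=> Lt le_k cnt_k.
pose P i := `[< exists S'' : {set S}, term_count s0 h s (take i t) m S'' >].
have exP : exists i, P i by exists k; apply/asboolP; exists S'.
have [k' /asboolP [S'' cnt'] min_k'] := ex_minnP exP.
have le_k'k : k' <= k by apply: min_k'; apply/asboolP; exists S'.
exists k' => //; exists S''; split; first exact: inL_take.
split=> //; rewrite size_takel; last exact: leq_trans le_k.
apply/no_term_beforeP => i lt_ik' [S3].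
rewrite (take_takel _ (ltnW lt_ik')) => cnt3.
have : k' <= i by apply: min_k'; apply/asboolP; exists S3.
by rewrite leqNgt lt_ik'.
Qed.

Lemma term_no_earlier (s : S) (t : trace I O) (m k : nat) (S' : {set S}) :
  term s0 h s t m S' -> k < size t ->
  ~ exists S'' : {set S}, term_count s0 h s (take k t) m S''.
Proof. by move=> [_ [_ /no_term_beforeP before]]; apply: before. Qed.

End Termination.

Section Indistinguishable.

Variables (S I O : finType) (s0 : S) (h : S -> I -> O -> S -> bool) (n m : nat).

Hypothesis card_S : #|S| = n.
Hypothesis only_s0_dreachable : forall s : S, d_reachable s0 h s <-> s = s0.
Hypothesis no_rdist : forall s1 s2 : S, s1 != s2 -> ~ r_distinguishable h s1 s2.
Hypothesis n_le_m : n <= m.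

Lemma singleton_in_SD (s : S) : in_SD h [set s].
Proof.
split=> [s1 s2|B B_rdist].
  by rewrite !inE => /eqP -> /eqP ->; rewrite eqxx.
move=> /subsetP /(_ s (set11 s)) sB; apply/setP => x; rewrite inE.
apply/idP/eqP => [xB|-> //]; apply/eqP/negPn/negP => x_ne_s.
exact: no_rdist x_ne_s (B_rdist _ _ xB sB x_ne_s).
Qed.

Lemma SD_subsingleton (A : {set S}) :
  in_SD h A -> forall s1 s2, s1 \in A -> s2 \in A -> s1 = s2.
Proof.
move=> [A_rdist _] s1 s2 s1A s2A; apply/eqP/negPn/negP => ne12.
exact: no_rdist ne12 (A_rdist _ _ s1A s2A ne12).
Qed.

Lemma dhat_s0 (A : {set S}) : dhat s0 h A = A :&: [set s0].
Proof.
by apply/setP => x; rewrite !inE; congr (_ && _); apply/asboolP/eqP => /only_s0_dreachable.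
Qed.

Lemma card_dhat1 (s : S) : #|dhat s0 h [set s]| = (s == s0).
Proof.
rewrite dhat_s0; have [-> | s_ne] := eqVneq s s0; first by rewrite setIid cards1.
rewrite (_ : _ :&: _ = set0) ?cards0 //; apply/setP => x; rewrite !inE.
by have [-> | //] := eqVneq x s; rewrite (negbTE s_ne).
Qed.

(* Pigeonhole: among the first m n nonempty prefixes of a trace starting in
   s0 some state s is visited exactly m - [s == s0] + 1 times by some prefix,
   which is the counting condition of termination for {s}. *)
Lemma counting_condition_within (t : trace I O) :
  m * n <= size t ->
  exists2 k, k <= m * n & exists S' : {set S}, term_count s0 h s0 (take k t) m S'.
Proof.
move=> size_t.
have n_gt0 : 0 < n by rewrite -card_S; apply/card_gt0P; exists s0.
pose f j := after h s0 (take j t).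
pose cap (s : S) := m - (s == s0).
have sum_cap : \sum_(s : S) cap s < size (iota 1 (m * n)).
  rewrite size_iota (bigD1 s0) //= /cap eqxx.
  rewrite (eq_bigr (fun=> m)) => [|s /negbTE ->]; last by rewrite subn0.
  rewrite sum_nat_const cardC1 card_S /= -subn1; nia.
have [s over_s] := pigeonhole_count f sum_cap.
pose visits k := count (fun j => f j == s) (iota 1 k).
have [k le_k visits_k] : exists2 k, k <= m * n & visits k = cap s + 1.
  apply: discrete_ivt => [//|k|]; last by rewrite addn1.
  rewrite /visits -[k.+1]addn1 iotaD count_cat /= addn0.
  by case: (_ == _); rewrite ?addn1 ?addn0.
exists k => //; exists [set s]; split; first exact: singleton_in_SD.
rewrite card_dhat1 size_takel; last exact: leq_trans size_t.
rewrite -visits_k; apply: eq_in_count => j; rewrite mem_iota => /andP[_ lt_j].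
by rewrite inE /f take_takel // -ltnS -(addn1 k) addnC.
Qed.

Lemma trace_terminates (t : trace I O) :
  inL h s0 t -> m * n <= size t ->
  exists2 k, k <= m * n & exists S' : {set S}, term s0 h s0 (take k t) m S'.
Proof.
move=> Lt size_t; have [k le_k [S' cnt]] := counting_condition_within size_t.
have [k' le_k'k term_k'] := first_termination Lt (leq_trans le_k size_t) cnt.
by exists k' => //; apply: leq_trans le_k.
Qed.

Lemma term_size (t : trace I O) (S' : {set S}) :
  term s0 h s0 t m S' -> size t <= m * n.
Proof.
move=> term_t; rewrite leqNgt; apply/negP => long_t.
have [k le_k cnt] := counting_condition_within (ltnW long_t).
exact: term_no_earlier term_t (leq_ltn_trans le_k long_t) cnt.
Qed.

Lemma Tr_size (xs : seq I) : Tr s0 h s0 m xs -> size xs <= m * n.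
Proof.
move=> [w [t [<- _ [S' term_t]]] [k ->]].
by rewrite size_take_min size_map geq_min (term_size term_t) orbT.
Qed.

Lemma d_step_trivial (v : S -> seq I) (p : S * trace I O) (T T' : Tset I) :
  d_step s0 h v m p T T' -> forall z, T' z <-> T z.
Proof.
move=> [Si [[_ [[SD_Si _] _]] [l [_ [_ chain_l]]]]].
apply: (chain_trivial _ chain_l) => q T1 T2 [_ unchanged]; apply: unchanged.
by move=> [ne12 in1 in2 _]; move: ne12; rewrite (SD_subsingleton SD_Si in1 in2) eqxx.
Qed.

(* The initial suite of step (1) is Tr(s0, m), since v_{s0} is empty. *)
Lemma T_init_Tr (v : S -> seq I) (z : seq I) :
  state_cover s0 h v -> T_init s0 h v m z <-> Tr s0 h s0 m z.
Proof.
move=> [v_s0 _]; split=> [[s [/only_s0_dreachable -> [w Tr_w ->]]]|Tr_z].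
  by rewrite v_s0.
by exists s0; split; [exact/only_s0_dreachable | exists z; rewrite ?v_s0].
Qed.

Lemma generated_suite_maximal (T : Tset I) :
  GenerateTestSuite s0 h m T ->
  forall z, T z <-> Tr s0 h s0 m z /\ ~ exists2 z', Tr s0 h s0 m z' & is_proper_prefix z z'.
Proof.
move=> [v [cover [d [_ [_ [T2 [chain_d T_def]]]]]]].
have T2_Tr z : T2 z <-> Tr s0 h s0 m z.
  by rewrite (chain_trivial (@d_step_trivial v) chain_d z); exact: T_init_Tr.
by move=> z; rewrite T_def T2_Tr; split=> -[Tr_z max_z];
  split=> // -[z' /T2_Tr Tr_z' pre]; apply: max_z; exists z'.
Qed.

Lemma generated_suite_size (T : Tset I) :
  GenerateTestSuite s0 h m T ->
  exists l : seq (seq I),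
    [/\ uniq l, forall z, T z <-> z \in l & size l <= #|I| ^ (m * n)].
Proof.
move=> gen; have T_max := generated_suite_maximal gen.
have T_size z : T z -> size z <= m * n by move=> /T_max [/Tr_size].
have [l [l_uniq l_T]] := bounded_words_enum T_size.
exists l; split=> //; case: l l_uniq l_T => [//|z0 l'] l_uniq l_T.
have [x0] : inhabited I.
  by have /T_max [Tr_z0 _] := (l_T z0).2 (mem_head z0 l'); exact: Tr_inhabited Tr_z0.
apply: (prefix_free_size x0) => // [z /l_T /T_size // | z1 z2 /l_T T1 /l_T T2 pre].
have [_ max1] := (T_max z1).1 T1; apply: max1.
by exists z2 => //; exact: ((T_max z2).1 T2).1.
Qed.

End Indistinguishable.

Unset Implicit Arguments.

Theorem mainTheorem4 (S I O : finType) (s0 : S) (h : S -> I -> O -> S -> bool)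
    (n m : nat) :
  observable h ->
  #|S| = n ->
  (forall s : S, exists t, inL h s0 t /\ after h s0 t = s) ->
  (forall s : S, d_reachable s0 h s <-> s = s0) ->
  (forall s1 s2 : S, s1 != s2 -> ~ r_distinguishable h s1 s2) ->
  n <= m ->
  ((forall t : trace I O, inL h s0 t -> size t = m * n ->
      exists2 k, k <= size t & exists S' : {set S}, term s0 h s0 (take k t) m S')
   /\ (forall xs : seq I, Tr s0 h s0 m xs -> size xs <= m * n))
  /\
  (forall T : seq I -> Prop, GenerateTestSuite s0 h m T ->
     exists l : seq (seq I),
       [/\ uniq l, (forall z, T z <-> z \in l) & size l <= #|I| ^ (m * n)]).
Proof.
move=> _ card_S _ only_s0 no_rdist n_le_m.
split; [split|].
- move=> t Lt size_t; rewrite size_t.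
  exact: (trace_terminates card_S only_s0 no_rdist n_le_m Lt (eq_leq (esym size_t))).
- by move=> xs; apply: (Tr_size card_S only_s0 no_rdist n_le_m).
- by move=> T; apply: (generated_suite_size card_S only_s0 no_rdist n_le_m).
Qed.
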